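(* Let $\theta=q/r$ with $q,r$ coprime positive integers and let $(U,V)$ be an irreducible finite-dimensional unitary representation of $\mathcal A_\theta$ on $\mathcal H$. Then every irreducible finite-dimensional representation of $\mathcal A_\theta$ is unitarily equivalent to $(sU,tV)$ for some $s,t\in S^1$ (so the irreducible representations are indexed by points of a 2-torus), and all the bundles $\mathcal E_\pi$ associated with irreducible finite-dimensional representations $\pi$ of $\mathcal A_\theta$ are isomorphic as topological complex vector bundles over $\mathbb C/\Lambda$.
   Context: Let $\tau\in\mathbb C$ with $\mathrm{Im}\,\tau>0$, $\Lambda=\mathbb Z+\tau\mathbb Z$, $\theta>0$, $\alpha:=\pi\theta/\mathrm{Im}\,\tau$. $\mathcal A_\theta$ is the noncommutative torus generated by unitaries $u,v$ with $vu=e^{2\pi i\theta}uv$. For a representation $\pi$ of $\mathcal A_\theta$ on a finite-dimensional Hilbert space $\mathcal H_\pi$ and $\gamma=n+\tau m\in\Lambda$, set $J^\pi_\gamma(z)=\exp(\alpha(z\bar\gamma+\frac12|\gamma|^2))e^{\pi i\theta nm}\pi(u)^{-n}\pi(v)^{-m}$; $\mathcal E_\pi\to\mathbb C/\Lambda$ is the holomorphic vector bundle whose smooth (resp. holomorphic) sections are smooth (resp. holomorphic) maps $s:\mathbb C\to\mathcal H_\pi$ with $s(z+\gamma)=J^\pi_\gamma(z)s(z)$ for all $\gamma\in\Lambda$. *)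

From HB Require Import structures.
From mathcomp Require Import all_boot all_order all_algebra.
From mathcomp Require Import all_classical all_reals.
From mathcomp Require Import topology normedtype exp trigo.
From mathcomp Require Import all_analysis.
From mathcomp Require Import complex.
Set Implicit Arguments. Unset Strict Implicit. Unset Printing Implicit Defensive.
Import Order.TTheory GRing.Theory Num.Theory.
Import numFieldNormedType.Exports.
Local Open Scope ring_scope.
Local Open Scope complex_scope.

Section NCTorus.
Variable R : realType.
Local Notation C := R[i].

Definition cexp (z : C) : C :=
  (expR (complex.Re z))%:C * (cos (complex.Im z) +i* sin (complex.Im z)).

Definition adjmx m n (M : 'M[C]_(m, n)) : 'M[C]_(n, m) := (map_mx conjc M)^T.

Definition unitarymx n (M : 'M[C]_n) : Prop :=
  adjmx M *m M = 1%:M /\ M *m adjmx M = 1%:M.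

Definition mxpowz n (M : 'M[C]_n) (k : int) : 'M[C]_n :=
  match k with
  | Posz m => M ^+ m
  | Negz m => (invmx M) ^+ m.+1
  end.

Definition theta_of (q r : nat) : R := q%:R / r%:R.

(* A (unitary, i.e. *-) representation of A_theta on C^n (the Hilbert space
   H_pi, with standard inner product): pi(u) = U, pi(v) = V unitary with
   V U = e^{2 pi i theta} U V. *)
Definition is_rep (theta : R) n (U V : 'M[C]_n) : Prop :=
  [/\ unitarymx U, unitarymx V &
      V *m U = cexp (0 +i* (2 * pi * theta)) *: (U *m V)].

(* Subspaces of column vectors C^n are encoded as row spaces of the
   transposed vectors: x in S <-> x^T in rowspace W; U S <= S <-> W U^T <= W. *)
Definition is_irrep (theta : R) n (U V : 'M[C]_n) : Prop :=
  [/\ is_rep theta U V, (0 < n)%N &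
      forall W : 'M[C]_n,
        (W *m U^T <= W)%MS -> (W *m V^T <= W)%MS ->
        \rank W = 0%N \/ \rank W = n].

Definition unit_equiv m n (U' V' : 'M[C]_m) (U V : 'M[C]_n) : Prop :=
  exists W : 'M[C]_(m, n),
    [/\ adjmx W *m W = 1%:M, W *m adjmx W = 1%:M,
        U' = W *m U *m adjmx W & V' = W *m V *m adjmx W].

Definition alpha (theta : R) (tau : C) : R := pi * theta / complex.Im tau.

Definition Jfac (theta : R) (tau : C) n (U V : 'M[C]_n) (a b : int) (z : C)
  : 'M[C]_n :=
  let gamma : C := a%:~R + tau * b%:~R in
  (cexp ((alpha theta tau)%:C * (z * gamma^* + 2^-1 * (gamma * gamma^*)))
   * cexp (0 +i* (pi * theta * a%:~R * b%:~R)))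
  *: (mxpowz U (- a) *m mxpowz V (- b)).

Definition cont_mxfun m n (F : C -> 'M[C]_(m, n)) : Prop :=
  forall i j,
    continuous (fun p : (R * R)%type => complex.Re (F (p.1 +i* p.2) i j)) /\
    continuous (fun p : (R * R)%type => complex.Im (F (p.1 +i* p.2) i j)).

(* E_pi and E_pi' are isomorphic as topological complex vector bundles over
   C/Lambda: a continuous bundle isomorphism lifts to a continuous map
   Phi : C -> Iso(H_pi, H_pi') (with continuous inverse Psi) intertwining
   the factors of automorphy. *)
Definition bundle_iso (theta : R) (tau : C) m n
  (U V : 'M[C]_n) (U' V' : 'M[C]_m) : Prop :=
  exists (Phi : C -> 'M[C]_(m, n)) (Psi : C -> 'M[C]_(n, m)),
    [/\ cont_mxfun Phi, cont_mxfun Psi,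
        forall z, Psi z *m Phi z = 1%:M,
        forall z, Phi z *m Psi z = 1%:M &
        forall (a b : int) z,
          Phi (z + (a%:~R + tau * b%:~R)) *m Jfac theta tau U V a b z
          = Jfac theta tau U' V' a b z *m Phi z].

End NCTorus.

From Pilot Require Import Defs.
From HB Require Import structures.
From mathcomp Require Import all_boot all_order all_algebra.
From mathcomp Require Import all_classical all_reals.
From mathcomp Require Import topology normedtype exp trigo.
From mathcomp Require Import all_analysis.
From mathcomp Require Import complex.
From mathcomp Require Import ring lra.
Import Order.TTheory GRing.Theory Num.Theory.
Import numFieldNormedType.Exports.
Local Open Scope ring_scope.
Local Open Scope complex_scope.
Set Implicit Arguments. Unset Strict Implicit. Unset Printing Implicit Defensive.

(* For theta = q/r, omega = e^(2 pi i theta) is a primitive r-th root of unity.  In an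
   irreducible representation (U, V), V^r commutes with U and V, hence is a scalar mu^r by
   Schur's lemma.  If x is a unit eigenvector of U with eigenvalue lam, the vectors
   mu^-k V^k x (k < r) are eigenvectors of the unitary U for the distinct eigenvalues
   lam omega^-k, hence orthonormal, and they span a subspace invariant under U and V,
   hence everything.  In this basis U = lam C and V = mu S, with C = diag(omega^-k) the
   clock and S the cyclic shift matrix, so any two irreducible representations differ by a
   unitary conjugation W and scalars s = e^(i sg1), t = e^(i sg2).  Their factors of
   automorphy then differ by the conjugation and the character a + tau b |-> s^-a t^-b,
   which is also the multiplier of the continuous function e^(i (al Re z + be Im z)) for
   suitable real al, be; so z |-> e^(i (al Re z + be Im z)) W is a bundle isomorphism. *)

Section Unitary.
Variable R : realType.
Local Notation C := R[i].

Lemma adjmxM m n p (A : 'M[C]_(m, n)) (B : 'M[C]_(n, p)) :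
  adjmx (A *m B) = adjmx B *m adjmx A.
Proof. by rewrite /adjmx map_mxM trmx_mul. Qed.

Lemma adjmxK m n (A : 'M[C]_(m, n)) : adjmx (adjmx A) = A.
Proof. by apply/matrixP => i j; rewrite !mxE conjcK. Qed.

Lemma adjmxZ m n a (A : 'M[C]_(m, n)) : adjmx (a *: A) = a^* *: adjmx A.
Proof. by apply/matrixP => i j; rewrite !mxE rmorphM. Qed.

Lemma adjmx1 n : adjmx (1%:M : 'M[C]_n) = 1%:M.
Proof. by rewrite /adjmx map_mx1 trmx1. Qed.

Lemma unitarymx_invertible n (A : 'M[C]_n) : Defs.unitarymx A -> A \in unitmx.
Proof. by case=> AA _; case: (mulmx1_unit AA). Qed.

Lemma unitarymxX n (A : 'M[C]_n) k : Defs.unitarymx A -> Defs.unitarymx (A ^+ k).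
Proof.
move=> [AA AA']; elim: k => [|k [IH IH']].
  by rewrite expr0; split; rewrite adjmx1 mulmx1.
rewrite exprS -mulmxE; split; rewrite adjmxM.
  by rewrite mulmxA -(mulmxA _ _ A) AA mulmx1 IH.
by rewrite mulmxA -(mulmxA A) IH' mulmx1 AA'.
Qed.

Definition cdot n (x y : 'cV[C]_n) : C := (adjmx x *m y) 0 0.

Lemma cdotE n (x y : 'cV[C]_n) : cdot x y = \sum_i (x i 0)^* * y i 0.
Proof. by rewrite /cdot !mxE; apply: eq_bigr => i _; rewrite !mxE. Qed.

Lemma cdotZl n a (x y : 'cV[C]_n) : cdot (a *: x) y = a^* * cdot x y.
Proof. by rewrite /cdot adjmxZ -scalemxAl mxE. Qed.

Lemma cdotZr n a (x y : 'cV[C]_n) : cdot x (a *: y) = a * cdot x y.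
Proof. by rewrite /cdot -scalemxAr mxE. Qed.

Lemma cdot_isometry m n (A : 'M[C]_(m, n)) (x y : 'cV[C]_n) :
  adjmx A *m A = 1%:M -> cdot (A *m x) (A *m y) = cdot x y.
Proof. by move=> AA; rewrite /cdot adjmxM mulmxA -(mulmxA _ _ A) AA mulmx1. Qed.

Lemma cdot_ge0 n (x : 'cV[C]_n) : 0 <= cdot x x.
Proof. by rewrite cdotE; apply: sumr_ge0 => i _; rewrite mulrC -normCK exprn_ge0. Qed.

Lemma cdot_eq0 n (x : 'cV[C]_n) : (cdot x x == 0) = (x == 0).
Proof.
apply/idP/eqP => [|->]; last by rewrite /cdot mulmx0 mxE.
rewrite cdotE psumr_eq0 => [/allP x0|i _]; last by rewrite mulrC -normCK exprn_ge0.
apply/matrixP => i j; rewrite (ord1 j) mxE.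
have /implyP/(_ isT) := x0 i (mem_index_enum _).
by rewrite mulrC -normCK expf_eq0 /= normr_eq0 => /eqP.
Qed.

Lemma normC_eq1 (a : C) : `|a| = 1 <-> a^* * a = 1.
Proof.
rewrite -normCKC; split=> [->|/eqP a1]; first exact: expr1n.
by apply/eqP; rewrite -(@pexpr_eq1 _ _ 2).
Qed.

Lemma unitary_eigenvalue_norm n (A : 'M[C]_n) (x : 'cV[C]_n) a :
  Defs.unitarymx A -> x != 0 -> A *m x = a *: x -> `|a| = 1.
Proof.
move=> [AA _] x0 Ax; apply/normC_eq1.
have := cdot_isometry x x AA; rewrite Ax cdotZl cdotZr mulrA.
rewrite -{2}[cdot x x]mul1r => /mulIf; apply; by rewrite cdot_eq0.
Qed.

Lemma unitary_eigenvector_orthogonal n (A : 'M[C]_n) (x y : 'cV[C]_n) a b :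
  Defs.unitarymx A -> `|a| = 1 -> A *m x = a *: x -> A *m y = b *: y -> a != b ->
  cdot x y = 0.
Proof.
move=> [AA _] /normC_eq1 a1 Ax Ay ab.
have := cdot_isometry x y AA; rewrite Ax Ay cdotZl cdotZr mulrA.
move/eqP; rewrite -subr_eq0 -{2}[cdot x y]mul1r -mulrBl mulf_eq0 subr_eq0.
case/orP=> [/eqP ab1|/eqP //]; case/eqP: ab.
by rewrite -[b]mul1r -a1 mulrAC ab1 mul1r.
Qed.

Lemma unit_eigenvector_exists n (A : 'M[C]_n) : (0 < n)%N ->
  exists x : 'cV[C]_n, exists a, cdot x x = 1 /\ A *m x = a *: x.
Proof.
move=> /(eigenvalue_closed A^T)[a /eigenvalueP[v vA v0]].
set y := v^T; have Ay : A *m y = a *: y by rewrite /y -[A]trmxK -trmx_mul vA linearZ.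
have y0 : cdot y y != 0 by rewrite cdot_eq0 trmx_eq0.
exists ((sqrtC (cdot y y))^-1 *: y), a; split.
  rewrite cdotZl cdotZr geC0_conj ?invr_ge0 ?sqrtC_ge0 ?cdot_ge0 //.
  by rewrite mulrA -expr2 exprVn sqrtCK mulVf.
by rewrite -scalemxAr Ay !scalerA mulrC.
Qed.

End Unitary.

Section Expi.
Variable R : realType.
Local Notation C := R[i].

Definition expi (x : R) : C := cos x +i* sin x.

Lemma cexp_imag x : cexp (0 +i* x) = expi x.
Proof. by rewrite /cexp /= expR0 mul1r. Qed.

Lemma expi0 : expi 0 = 1.
Proof. by rewrite /expi cos0 sin0. Qed.

Lemma expiD x y : expi (x + y) = expi x * expi y.
Proof.
by apply/eqP; rewrite eq_complex /= cosD sinD; apply/andP; split; apply/eqP; ring.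
Qed.

Lemma expiMn x k : expi x ^+ k = expi (x *+ k).
Proof. by elim: k => [|k IH]; rewrite ?expr0 ?expi0 // exprS IH mulrS expiD. Qed.

Lemma norm_expi x : `|expi x| = 1.
Proof.
apply/normC_eq1/eqP; rewrite eq_complex /=; have := cos2Dsin2 x.
by rewrite !expr2 => h; apply/andP; split; apply/eqP; lra.
Qed.

Lemma expi_neq0 x : expi x != 0.
Proof. by rewrite -normr_eq0 norm_expi oner_eq0. Qed.

Lemma expiN x : expi (- x) = (expi x)^-1.
Proof. by rewrite -[LHS]mul1r -(mulVf (expi_neq0 x)) -mulrA -expiD subrr expi0 mulr1. Qed.

Lemma expiz x (k : int) : expi x ^ k = expi (x * k%:~R).
Proof.
case: k => k; rewrite /exprz expiMn; first by rewrite -mulr_natr.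
by rewrite -expiN NegzE intrN mulrN -mulr_natr.
Qed.

Lemma expi_natmul2pi k : expi (pi *+ 2 *+ k) = 1.
Proof. by rewrite -expiMn /expi cos2pi sin2pi expr1n. Qed.

Lemma expi_neq1 x : 0 < x < pi *+ 2 -> expi x != 1.
Proof.
move=> /andP[x0 x2pi]; rewrite eq_complex /= negb_and; apply/orP.
case: (ltrgtP x pi) => xpi.
- by right; rewrite gt_eqF // sin_gt0_pi // x0 xpi.
- right; rewrite -(subrK pi x) sinDpi oppr_eq0 gt_eqF // sin_gt0_pi //.
  by rewrite subr_gt0 xpi ltrBlDr -mulr2n.
- by left; rewrite xpi cospi; apply/eqP => h; have := @ltr01 R; lra.
Qed.

Lemma expi_2pi_ratio_eq1 (k d : nat) : (0 < d)%N ->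
  (expi (pi *+ 2 * (k%:R / d%:R)) == 1) = (d %| k)%N.
Proof.
move=> d0; set m := (k %% d)%N.
have dR0 : d%:R != 0 :> R by rewrite pnatr_eq0 -lt0n.
have -> : pi *+ 2 * (k%:R / d%:R) = pi *+ 2 *+ (k %/ d) + pi *+ 2 * (m%:R / d%:R) :> R.
  have kE : k%:R = (k %/ d)%:R * d%:R + m%:R :> R by rewrite -natrM -natrD -divn_eq.
  by rewrite kE -mulr_natr; field.
rewrite expiD expi_natmul2pi mul1r /dvdn -/m.
have [->|m0] := eqVneq m 0%N; first by rewrite mul0r mulr0 expi0 !eqxx.
apply: negbTE; apply: expi_neq1.
have md0 : 0 < m%:R / d%:R :> R by rewrite divr_gt0 ?ltr0n // lt0n.
have md1 : m%:R / d%:R < 1 :> R by rewrite ltr_pdivrMr ?ltr0n // mul1r ltr_nat ltn_mod.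
have := @pi_gt0 R; rewrite -mulr_natl => pi0; apply/andP; split; nra.
Qed.

Lemma norm1_expi (s : C) : `|s| = 1 -> exists x, s = expi x.
Proof.
case: s => a b s1.
have ab1 : a ^+ 2 + b ^+ 2 = 1.
  by apply: (@complexI R); have := add_Re2_Im2 (a +i* b); rewrite s1 expr1n.
have a11 : -1 <= a <= 1.
  by have := sqr_ge0 b; rewrite !expr2 in ab1 * => b2; apply/andP; split; nra.
have cos_a : cos (acos a) = a by rewrite acosK // in_itv.
have sin_a : sin (acos a) = `|b| by rewrite sin_acos // -ab1 addrC addKr sqrtr_sqr.
have [b0|b0] := leP 0 b.
  by exists (acos a); rewrite /expi cos_a sin_a ger0_norm.
by exists (- acos a); rewrite /expi cosN sinN cos_a sin_a ltr0_norm // opprK.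
Qed.

Definition omega (theta : R) : C := cexp (0 +i* (2 * pi * theta)).

Lemma norm_omega theta : `|omega theta| = 1.
Proof. by rewrite /omega cexp_imag norm_expi. Qed.

Lemma omega_primitive (q r : nat) : (0 < r)%N -> coprime q r ->
  r.-primitive_root (omega (theta_of R q r)).
Proof.
move=> r0 qr; have rR0 : r%:R != 0 :> R by rewrite pnatr_eq0 -lt0n.
have omegaX d : omega (theta_of R q r) ^+ d = expi (pi *+ 2 * ((q * d)%:R / r%:R)).
  by rewrite /omega cexp_imag expiMn -mulr_natr /theta_of natrM; congr expi; field.
rewrite /primitive_root_of_unity r0; apply/forallP => i.
rewrite unity_rootE omegaX expi_2pi_ratio_eq1 // Gauss_dvdr 1?coprime_sym //.
rewrite eqn_leq ltn_ord /=; apply/eqP; apply/idP/idP => [/dvdn_leq -> //|ri].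
by have -> : i.+1 = r by apply/eqP; rewrite eqn_leq ri ltn_ord.
Qed.

End Expi.

Section Irreducibility.
Variable R : realType.
Local Notation C := R[i].

Lemma mulmx_exprC n (U V : 'M[C]_n) c k :
  V *m U = c *: (U *m V) -> V ^+ k *m U = c ^+ k *: (U *m V ^+ k).
Proof.
move=> VU; elim: k => [|k IH]; first by rewrite !expr0 scale1r mul1mx mulmx1.
rewrite !exprS -!mulmxE -mulmxA IH -scalemxAr (mulmxA V U) VU -scalemxAl.
by rewrite scalerA mulrC -mulmxA.
Qed.

Lemma irrep_commutant_scalar th n (U V M : 'M[C]_n) : is_irrep th U V ->
  M *m U = U *m M -> M *m V = V *m M -> exists c, M = c%:M.
Proof.
move=> [_ n0 irr] MU MV.
have [c Mc] := eigenvalue_closed M^T n0; exists c.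
set B := M^T - c%:M.
have kerB_stable X : M *m X = X *m M -> (kermx B *m X^T <= kermx B)%MS.
  move=> MX; rewrite sub_kermx -mulmxA.
  have -> : X^T *m B = B *m X^T.
    by rewrite /B mulmxBr mulmxBl scalar_mxC -!trmx_mul MX.
  by rewrite mulmxA mulmx_ker mul0mx.
have [kerB0|kerBn] := irr (kermx B) (kerB_stable U MU) (kerB_stable V MV).
  by move: Mc; rewrite /eigenvalue /eigenspace -mxrank_eq0 -/B kerB0 eqxx.
have /row_fullP[B' kerB1] : row_full (kermx B) by rewrite /row_full kerBn.
have /eqP : B = 0 by rewrite -[B]mul1mx -kerB1 -mulmxA mulmx_ker mulmx0.
by rewrite subr_eq0 => /eqP MTc; rewrite -[M]trmxK MTc tr_scalar_mx.
Qed.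

Lemma irrep_isometry_unitary th n m (U V : 'M[C]_n) (Y : 'M[C]_(n, m))
    (A B : 'M[C]_m) :
  is_irrep th U V -> (0 < m)%N -> adjmx Y *m Y = 1%:M ->
  U *m Y = Y *m A -> V *m Y = Y *m B -> Y *m adjmx Y = 1%:M.
Proof.
move=> [_ _ irr] m0 YY UY VY.
have colY_stable X D : X *m Y = Y *m D -> (<<Y^T>> *m X^T <= <<Y^T>>)%MS.
  by move=> XY; rewrite (eqmxMr _ (genmxE _)) genmxE -trmx_mul XY trmx_mul submxMl.
have [Y0|Yfull] := irr _ (colY_stable _ _ UY) (colY_stable _ _ VY).
  move/eqP: Y0; rewrite genmxE mxrank_eq0 trmx_eq0 => /eqP Y0.
  move: YY; rewrite Y0 mulmx0 => /matrixP/(_ (Ordinal m0) (Ordinal m0)).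
  by rewrite !mxE eqxx => /eqP; rewrite eq_sym oner_eq0.
have /row_fullP[B' YB'] : row_full Y^T by rewrite /row_full -genmxE Yfull.
have YB'1 : Y *m B'^T = 1%:M by rewrite -[Y]trmxK -trmx_mul YB' trmx1.
by rewrite -[LHS]mulmx1 -YB'1 mulmxA -(mulmxA Y) YY mulmx1.
Qed.

End Irreducibility.

Section ClockShift.
Variable R : realType.
Local Notation C := R[i].

Lemma unit_equiv_sym m n (U' V' : 'M[C]_m) (U V : 'M[C]_n) :
  unit_equiv U' V' U V -> unit_equiv U V U' V'.
Proof.
case=> W [WW WW' -> ->]; exists (adjmx W); rewrite adjmxK.
by split=> //; rewrite !mulmxA WW mul1mx -mulmxA WW mulmx1.
Qed.

Lemma unit_equiv_trans m n p (U1 V1 : 'M[C]_m) (U2 V2 : 'M[C]_n) (U3 V3 : 'M[C]_p) :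
  unit_equiv U1 V1 U2 V2 -> unit_equiv U2 V2 U3 V3 -> unit_equiv U1 V1 U3 V3.
Proof.
case=> W1 [W11 W11' -> ->] [W2 [W22 W22' -> ->]]; exists (W1 *m W2).
rewrite adjmxM !mulmxA; split=> //.
  by rewrite -[adjmx W2 *m _ *m W1]mulmxA W11 mulmx1 W22.
by rewrite -[W1 *m W2 *m _]mulmxA W22' mulmx1 W11'.
Qed.

Lemma unit_equivZ m n s t (U' V' : 'M[C]_m) (U V : 'M[C]_n) :
  unit_equiv U' V' U V -> unit_equiv (s *: U') (t *: V') (s *: U) (t *: V).
Proof.
by case=> W [WW WW' -> ->]; exists W; split; rewrite // -scalemxAr -scalemxAl.
Qed.

Lemma intertwiner_conj m n (A : 'M[C]_n) (Y : 'M[C]_(n, m)) (B : 'M[C]_m) :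
  Y *m adjmx Y = 1%:M -> A *m Y = Y *m B -> A = Y *m B *m adjmx Y.
Proof. by move=> YY AY; rewrite -[A]mulmx1 -YY mulmxA AY. Qed.

Definition clock_mx (om : C) r : 'M[C]_r := diag_mx (\row_(k < r) om ^- k).
Definition shift_mx r : 'M[C]_r := \matrix_(j < r, k < r) ((j : nat) == (k.+1 %% r)%N)%:R.

Variables (q r : nat).
Hypotheses (r_gt0 : (0 < r)%N) (coprime_qr : coprime q r).
Local Notation om := (omega (theta_of R q r)).

Let om_prim : r.-primitive_root om := @omega_primitive R q r r_gt0 coprime_qr.
Let om_neq0 : om != 0. Proof. by rewrite -normr_eq0 norm_omega oner_eq0. Qed.

Section OrbitBasis.
Variables (n : nat) (U V : 'M[C]_n).
Hypothesis irrUV : is_irrep (theta_of R q r) U V.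
Variables (x : 'cV[C]_n) (lam mu : C).
Hypotheses (x1 : cdot x x = 1) (Ux : U *m x = lam *: x).
Hypotheses (lam1 : `|lam| = 1) (mu1 : `|mu| = 1) (Vr : V ^+ r = (mu ^+ r)%:M).

Let uU : Defs.unitarymx U. Proof. by case: irrUV => [[]]. Qed.
Let uV : Defs.unitarymx V. Proof. by case: irrUV => [[]]. Qed.
Let VU : V *m U = om *: (U *m V). Proof. by case: irrUV => [[]]. Qed.

Let basis_vec k : 'cV[C]_n := mu ^- k *: (V ^+ k *m x).

Let U_basis_vec k : U *m basis_vec k = (lam * om ^- k) *: basis_vec k.
Proof.
have UVk : U *m V ^+ k = om ^- k *: (V ^+ k *m U).
  by rewrite (mulmx_exprC k VU) scalerA mulVf ?expf_neq0 ?scale1r.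
rewrite /basis_vec -scalemxAr mulmxA UVk -scalemxAl -mulmxA Ux -scalemxAr.
by rewrite !scalerA; congr (_ *: _); ring.
Qed.

Let basis_eigenvalue_inj (j k : 'I_r) : (lam * om ^- j == lam * om ^- k) = (j == k).
Proof.
have lam0 : lam != 0 by rewrite -normr_eq0 lam1 oner_eq0.
rewrite (inj_eq (mulfI lam0)) (inj_eq (@invr_inj _)) (eq_prim_root_expr om_prim).
by rewrite !modn_small.
Qed.

Let cdot_basis_vec (j k : 'I_r) : cdot (basis_vec j) (basis_vec k) = (j == k)%:R.
Proof.
have [<-|jk] := eqVneq j k.
  rewrite cdotZl cdotZr cdot_isometry ?x1 ?mulr1; last by case: (unitarymxX j uV).
  by apply/normC_eq1; rewrite normfV normrX mu1 expr1n invr1.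
apply: unitary_eigenvector_orthogonal uU _ (U_basis_vec j) (U_basis_vec k) _.
  by rewrite normrM normfV normrX norm_omega lam1 expr1n invr1 mulr1.
by rewrite basis_eigenvalue_inj.
Qed.

Let V_basis_vec (k : 'I_r) : V *m basis_vec k = mu *: basis_vec (k.+1 %% r)%N.
Proof.
have mu0 : mu != 0 by rewrite -normr_eq0 mu1 oner_eq0.
have VVk : V *m V ^+ k = V ^+ k.+1 by rewrite exprS mulmxE.
rewrite /basis_vec -scalemxAr mulmxA VVk scalerA.
have [kr|] := ltnP k.+1 r.
  by rewrite modn_small // [mu ^+ k.+1]exprS invfM mulrA mulfV ?mul1r.
move=> rk; have kr : k.+1 = r by apply/eqP; rewrite eqn_leq rk ltn_ord.
rewrite kr modnn !expr0 invr1 mulr1 mul1mx Vr mul_scalar_mx scalerA.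
have -> : mu ^+ r = mu ^+ k.+1 by rewrite kr.
by rewrite exprS mulrCA mulVf ?expf_neq0 ?mulr1.
Qed.

Definition orbit_basis : 'M[C]_(n, r) := \matrix_(i, k) basis_vec k i 0.

Let mulmx_orbit_basis m (A : 'M[C]_(m, n)) i (k : 'I_r) :
  (A *m orbit_basis) i k = (A *m basis_vec k) i 0.
Proof. by rewrite !mxE; apply: eq_bigr => j _; rewrite mxE. Qed.

Lemma orbit_basis_isometry : adjmx orbit_basis *m orbit_basis = 1%:M.
Proof.
apply/matrixP => j k; rewrite mxE [RHS]mxE -cdot_basis_vec cdotE.
by apply: eq_bigr => i _; rewrite !mxE.
Qed.

Lemma U_orbit_basis : U *m orbit_basis = orbit_basis *m (lam *: clock_mx om r).
Proof.
apply/matrixP => i k; rewrite -scalemxAr mulmx_orbit_basis U_basis_vec mul_mx_diag.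
by rewrite !mxE; ring.
Qed.

Lemma V_orbit_basis : V *m orbit_basis = orbit_basis *m (mu *: shift_mx r).
Proof.
apply/matrixP => i k; rewrite -scalemxAr mulmx_orbit_basis V_basis_vec.
rewrite [LHS]mxE [RHS]mxE; congr (_ * _); rewrite [RHS]mxE.
rewrite (bigD1 (Ordinal (ltn_pmod k.+1 r_gt0))) //= big1 ?addr0.
  by rewrite !mxE eqxx mulr1.
move=> j jk; rewrite [shift_mx _ _ _]mxE; case: eqP => [j_eq|]; last by rewrite mulr0.
by case/eqP: jk; apply: val_inj.
Qed.

End OrbitBasis.

Lemma irrep_equiv_clock_shift n (U V : 'M[C]_n) : is_irrep (theta_of R q r) U V ->
  exists lam mu : C, [/\ `|lam| = 1, `|mu| = 1 &
    unit_equiv U V (lam *: clock_mx om r) (mu *: shift_mx r)].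
Proof.
move=> irrUV; have [[uU uV VU] n0 _] := irrUV.
have [x [lam [x1 Ux]]] := unit_eigenvector_exists U n0.
have x0 : x != 0 by rewrite -cdot_eq0 x1 oner_eq0.
have lam1 : `|lam| = 1 := unitary_eigenvalue_norm uU x0 Ux.
have [c Vr] : exists c, V ^+ r = c%:M.
  apply: (irrep_commutant_scalar irrUV); last by rewrite mulmxE -exprSr exprS.
  by rewrite (mulmx_exprC r VU) (prim_expr_order om_prim) scale1r.
have c1 : `|c| = 1.
  by apply: unitary_eigenvalue_norm (unitarymxX r uV) x0 _; rewrite Vr mul_scalar_mx.
set mu := r.-root c.
have mu1 : `|mu| = 1 by apply/eqP; rewrite -(pexpr_eq1 r_gt0) // -normrX (rootCK r_gt0) c1.
have Vr_mu : V ^+ r = (mu ^+ r)%:M by rewrite (rootCK r_gt0).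
have YY := orbit_basis_isometry irrUV x1 Ux lam1 mu1.
have UY := U_orbit_basis irrUV mu Ux.
have VY := V_orbit_basis x mu1 Vr_mu.
have YY' := irrep_isometry_unitary irrUV r_gt0 YY UY VY.
exists lam, mu; split=> //; exists (orbit_basis V x mu); split=> //.
  exact: intertwiner_conj YY' UY.
exact: intertwiner_conj YY' VY.
Qed.

Lemma irrep_unit_equiv m n (U V : 'M[C]_n) (U' V' : 'M[C]_m) :
  is_irrep (theta_of R q r) U V -> is_irrep (theta_of R q r) U' V' ->
  exists s t : C, [/\ `|s| = 1, `|t| = 1 & unit_equiv U' V' (s *: U) (t *: V)].
Proof.
move=> /irrep_equiv_clock_shift[lam [mu [lam1 mu1 UV_CS]]].
move=> /irrep_equiv_clock_shift[lam' [mu' [lam1' mu1' UV_CS']]].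
have lam0 : lam != 0 by rewrite -normr_eq0 lam1 oner_eq0.
have mu0 : mu != 0 by rewrite -normr_eq0 mu1 oner_eq0.
exists (lam' / lam), (mu' / mu); split.
- by rewrite normf_div lam1 lam1' divr1.
- by rewrite normf_div mu1 mu1' divr1.
apply: (unit_equiv_trans UV_CS'); apply: unit_equiv_sym.
by have := unit_equivZ (lam' / lam) (mu' / mu) UV_CS; rewrite !scalerA !divfK.
Qed.

End ClockShift.

Section Bundle.
Variable R : realType.
Local Notation C := R[i].

Section Conjugation.
Variables (m n : nat) (W : 'M[C]_(m, n)).
Hypotheses (WW : adjmx W *m W = 1%:M) (WW' : W *m adjmx W = 1%:M).

Lemma conj_exprn (X : 'M[C]_n) k : (W *m X *m adjmx W) ^+ k = W *m X ^+ k *m adjmx W.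
Proof.
elim: k => [|k IH]; first by rewrite !expr0 mulmx1 WW'.
rewrite !exprS -!mulmxE IH !mulmxA -(mulmxA _ (adjmx W) W) WW mulmx1.
by rewrite -(mulmxA W X).
Qed.

Lemma conj_invmx (X : 'M[C]_n) : X \in unitmx ->
  invmx (W *m X *m adjmx W) = W *m invmx X *m adjmx W.
Proof.
move=> Xunit.
have invXX : (W *m invmx X *m adjmx W) *m (W *m X *m adjmx W) = 1%:M.
  by rewrite !mulmxA -(mulmxA _ (adjmx W) W) WW mulmx1 -(mulmxA W) mulVmx // mulmx1 WW'.
have [_ XWunit] := mulmx1_unit invXX.
by rewrite -[LHS]mul1mx -invXX -(mulmxA (W *m invmx X *m adjmx W)) mulmxV // mulmx1.
Qed.

Lemma mxpowz_conj (X : 'M[C]_n) k : X \in unitmx ->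
  mxpowz (W *m X *m adjmx W) k = W *m mxpowz X k *m adjmx W.
Proof. by move=> Xunit; case: k => k; rewrite /mxpowz ?conj_invmx // conj_exprn. Qed.

End Conjugation.

Lemma mxpowzZ n (s : C) (X : 'M[C]_n) k : s != 0 -> X \in unitmx ->
  mxpowz (s *: X) k = s ^ k *: mxpowz X k.
Proof.
move=> s0 Xunit.
have exprZ c (Y : 'M[C]_n) j : (c *: Y) ^+ j = c ^+ j *: Y ^+ j.
  elim: j => [|j IH]; first by rewrite !expr0 scale1r.
  by rewrite !exprS IH -!mulmxE -scalemxAl -scalemxAr scalerA.
case: k => k; rewrite /mxpowz ?exprZ //.
by rewrite invmxZ ?unitmxZ ?unitfE // exprZ exprVn.
Qed.

Lemma Jfac_conj th tau m n (U V : 'M[C]_n) (W : 'M[C]_(m, n)) s t a b z :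
  adjmx W *m W = 1%:M -> W *m adjmx W = 1%:M -> s != 0 -> t != 0 ->
  U \in unitmx -> V \in unitmx ->
  Jfac th tau (W *m (s *: U) *m adjmx W) (W *m (t *: V) *m adjmx W) a b z
  = (s ^ (- a) * t ^ (- b)) *: (W *m Jfac th tau U V a b z *m adjmx W).
Proof.
move=> WW WW' s0 t0 Uunit Vunit.
rewrite /Jfac !mxpowz_conj ?unitmxZ ?unitfE // !mxpowzZ //.
rewrite !mulmxA -(mulmxA _ (adjmx W) W) WW mulmx1 -!scalemxAr -!scalemxAl !scalerA.
by congr (_ *: _); [ring | rewrite !mulmxA].
Qed.

Definition phase (al be : R) (z : C) : C := expi (al * complex.Re z + be * complex.Im z).

Lemma continuous_trig_comb (f : R * R -> R) (w1 w2 : R) : continuous f ->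
  continuous (fun p => cos (f p) * w1 + sin (f p) * w2).
Proof.
move=> fc p; apply: (@continuousD _ _ _ (fun p => cos (f p) * w1) (fun p => sin (f p) * w2)).
  apply: (@continuousM _ _ (fun p => cos (f p)) (fun _ => w1)); last exact: cst_continuous.
  by apply: (@continuous_comp _ _ _ f cos); [exact: fc | exact: continuous_cos].
apply: (@continuousM _ _ (fun p => sin (f p)) (fun _ => w2)); last exact: cst_continuous.
by apply: (@continuous_comp _ _ _ f sin); [exact: fc | exact: continuous_sin].
Qed.

Lemma continuous_linear2 (al be : R) : continuous (fun p : R * R => al * p.1 + be * p.2).
Proof.
move=> p; apply: (@continuousD _ _ _ (fun p : R * R => al * p.1) (fun p : R * R => be * p.2)).
  by apply: (@continuousM _ _ (fun _ => al) fst); [exact: cst_continuous | exact: cvg_fst].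
by apply: (@continuousM _ _ (fun _ => be) snd); [exact: cst_continuous | exact: cvg_snd].
Qed.

Lemma cont_mxfun_phase al be m n (M : 'M[C]_(m, n)) :
  cont_mxfun (fun z => phase al be z *: M).
Proof.
move=> i j; case Mij: (M i j) => [u v]; split.
- rewrite (_ : (fun p : R * R => _) = fun p =>
    cos (al * p.1 + be * p.2) * u + sin (al * p.1 + be * p.2) * (- v)).
    exact/continuous_trig_comb/continuous_linear2.
  by apply: funext => p; rewrite mxE Mij /=; ring.
- rewrite (_ : (fun p : R * R => _) = fun p =>
    cos (al * p.1 + be * p.2) * v + sin (al * p.1 + be * p.2) * u).
    exact/continuous_trig_comb/continuous_linear2.
  by apply: funext => p; rewrite mxE Mij /=; ring.
Qed.

Lemma phaseNK al be z : phase (- al) (- be) z * phase al be z = 1.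
Proof. by rewrite /phase -expiD addrACA -!mulrDl !addNr !mul0r addr0 expi0. Qed.

Lemma phase_shift sg1 sg2 be (tau z : C) (a b : int) : complex.Im tau != 0 ->
  be = (sg1 * complex.Re tau - sg2) / complex.Im tau ->
  phase (- sg1) be (z + (a%:~R + tau * b%:~R))
  = expi sg1 ^ (- a) * expi sg2 ^ (- b) * phase (- sg1) be z.
Proof.
move=> tau0 ->; rewrite /phase !expiz -!expiD; congr expi.
have intC (k : int) : (k%:~R : C) = (k%:~R : R)%:C by rewrite (rmorph_int (real_complex R)).
by rewrite !intC !intrN; move: tau0; case: z tau => [x y] [u v] /= v0; field.
Qed.

Lemma irrep_bundle_iso (tau : C) (q r : nat) m1 (U1 V1 : 'M[C]_m1) m2 (U2 V2 : 'M[C]_m2) :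
  0 < complex.Im tau -> (0 < r)%N -> coprime q r ->
  is_irrep (theta_of R q r) U1 V1 -> is_irrep (theta_of R q r) U2 V2 ->
  bundle_iso (theta_of R q r) tau U1 V1 U2 V2.
Proof.
move=> tau0 r0 qr irr1 irr2; have [[uU1 uV1 _] _ _] := irr1.
have [s [t [s1 t1 [W [WW WW' -> ->]]]]] := irrep_unit_equiv r0 qr irr1 irr2.
have [sg1 ->] := norm1_expi s1; have [sg2 ->] := norm1_expi t1.
pose al := - sg1; pose be := (sg1 * complex.Re tau - sg2) / complex.Im tau.
exists (fun z => phase al be z *: W), (fun z => phase (- al) (- be) z *: adjmx W).
split=> [||z|z|a b z].
- exact: cont_mxfun_phase.
- exact: cont_mxfun_phase.
- by rewrite -scalemxAl -scalemxAr scalerA phaseNK scale1r WW.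
- by rewrite -scalemxAl -scalemxAr scalerA mulrC phaseNK scale1r WW'.
rewrite Jfac_conj ?expi_neq0 ?unitarymx_invertible // /al.
rewrite (phase_shift _ _ _ (lt0r_neq0 tau0) erefl).
move: (Jfac _ _ U1 V1 a b z) => J.
by rewrite -!scalemxAl -scalemxAr scalerA -(mulmxA (W *m J)) WW mulmx1.
Qed.

End Bundle.

Unset Implicit Arguments.

Theorem corollary3p1 (R : realType) (tau : R[i]) (q r : nat) (n : nat)
    (U V : 'M[R[i]]_n) :
  0 < complex.Im tau -> (0 < q)%N -> (0 < r)%N -> coprime q r ->
  is_irrep (theta_of R q r) U V ->
  (forall m (U' V' : 'M[R[i]]_m), is_irrep (theta_of R q r) U' V' ->
     exists s t : R[i], [/\ `|s| = 1, `|t| = 1 &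
       unit_equiv U' V' (s *: U) (t *: V)]) /\
  (forall m1 (U1 V1 : 'M[R[i]]_m1) m2 (U2 V2 : 'M[R[i]]_m2),
     is_irrep (theta_of R q r) U1 V1 -> is_irrep (theta_of R q r) U2 V2 ->
     bundle_iso (theta_of R q r) tau U1 V1 U2 V2).
Proof.
move=> tau0 _ r0 qr irrUV; split=> [m U' V' irr'|m1 U1 V1 m2 U2 V2].
  exact (irrep_unit_equiv r0 qr irrUV irr').
exact: irrep_bundle_iso.
Qed.
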